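(* Let $m=p_1^{\alpha_1}p_2^{\alpha_2}$, where $p_1,p_2>2$ are distinct primes and $\alpha_1,\alpha_2$ are positive integers. Let $t=\mathrm{ord}_m(2)$ and let $\gamma\in\mathbb{F}_{2^t}^*$ be a primitive $m$th root of unity. Let $\rho(z_1,z_2)=(1+z_2^{-1})(1+z_1^{-1})^{-1}$ and let $$\mathcal{D}=\{(z_1,z_2)\in(\mathbb{F}_{2^t}^*\setminus\{1\})^2:\ \mathrm{ord}(z_1)\mid p_1^{\alpha_1},\ \mathrm{ord}(z_2)\mid p_2^{\alpha_2}\},$$ where $\mathrm{ord}(z)$ denotes the multiplicative order of $z$ in $\mathbb{F}_{2^t}^*$. Then $m$ is good if and only if $\rho$ is not injective on $\mathcal{D}$.
   Context: $\mathrm{ord}_m(2)$ is the multiplicative order of $2$ modulo $m$. The canonical set of $m$ is $S_m=\{s_{01},s_{10},s_{11}\}\subseteq\mathbb{Z}_m$, where for $\sigma=(\sigma_1,\sigma_2)\in\{0,1\}^2\setminus\{(0,0)\}$, $s_\sigma$ is the unique element of $\mathbb{Z}_m$ with $s_\sigma\equiv\sigma_1 \pmod{p_1^{\alpha_1}}$ and $s_\sigma\equiv \sigma_2\pmod{p_2^{\alpha_2}}$ (so $s_{11}=1$). An $S_m$-decoding polynomial is a polynomial $P(X)\in\mathbb{F}_{2^t}[X]$ such that $P(\gamma^s)=0$ for every $s\in S_m$ and $P(1)=1$. The number $m$ is called good if there exists an $S_m$-decoding polynomial with fewer than $4$ monomials (nonzero terms). *)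

From HB Require Import structures.
From mathcomp Require Import all_boot all_order all_algebra all_fingroup all_field.
Set Implicit Arguments. Unset Strict Implicit. Unset Printing Implicit Defensive.
Import GRing.Theory.
Local Open Scope ring_scope.

(* ord_mod m a = multiplicative order of a modulo m: the least k >= 1 with
   a^k = 1 (mod m).  (For gcd(a,m)=1 this k is <= m, so the search over
   1..m finds it.) *)
Definition ord_mod (m a : nat) : nat :=
  (find (fun k => (a ^ k.+1 %% m == 1 %% m)%N) (iota 0 m)).+1.

Definition canon_elt (q1 q2 : nat) (s1 s2 : bool) : nat :=
  (chinese q1 q2 s1 s2 %% (q1 * q2))%N.

Definition canonical_set (q1 q2 : nat) : seq nat :=
  [:: canon_elt q1 q2 false true; canon_elt q1 q2 true false;
      canon_elt q1 q2 true true].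

Definition nmonomials (F : fieldType) (P : {poly F}) : nat :=
  count (fun c => c != 0) P.

Definition decoding_poly (F : fieldType) (gamma : F) (q1 q2 : nat)
    (P : {poly F}) : Prop :=
  (forall s, s \in canonical_set q1 q2 -> P.[gamma ^+ s] = 0) /\ P.[1] = 1.

Definition good (F : fieldType) (gamma : F) (q1 q2 : nat) : Prop :=
  exists P : {poly F}, decoding_poly gamma q1 q2 P /\ (nmonomials P < 4)%N.

Definition rho (F : fieldType) (z1 z2 : F) : F :=
  (1 + z2^-1) * (1 + z1^-1)^-1.

Definition inD (F : finFieldType) (q1 q2 : nat) (z : {unit F} * {unit F}) : Prop :=
  [/\ z.1 != 1%g, z.2 != 1%g, (#[z.1]%g %| q1)%N & (#[z.2]%g %| q2)%N].

Definition rho_injective_on_D (F : finFieldType) (q1 q2 : nat) : Prop :=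
  forall z w : {unit F} * {unit F}, inD q1 q2 z -> inD q1 q2 w ->
    rho (FinRing.uval z.1) (FinRing.uval z.2) =
    rho (FinRing.uval w.1) (FinRing.uval w.2) -> z = w.

From HB Require Import structures.
From mathcomp Require Import all_boot all_order all_algebra all_fingroup all_field.
From mathcomp Require Import ring cyclic.
From Stdlib Require Import Setoid Classical_Prop.
Set Implicit Arguments. Unset Strict Implicit. Unset Printing Implicit Defensive.
Import GRing.Theory.
Local Open Scope ring_scope.

(* With x := gamma^s10 and y := gamma^s01 the canonical points are x, y and
   x y, and by the Chinese remainder theorem j |-> (x^j, y^j) maps onto
   mu_q1 x mu_q2.  Dividing a decoding trinomial a X^i + b X^j + c X^k by X^i,
   its four conditions become the linear system a + b + c = 1,
   a + b z1 + c w1 = a + b z2 + c w2 = a + b z1 z2 + c w1 w2 = 0 with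
   z = (x^j/x^i, y^j/y^i) and w = (x^k/x^i, y^k/y^i) in mu_q1 x mu_q2.
   Eliminating a, b, c, this system is solvable exactly when z <> w lie in D
   and (z2 - 1) z1 / ((z1 - 1) z2) = (w2 - 1) w1 / ((w1 - 1) w2), which in
   characteristic 2 is rho z = rho w. *)

Lemma root1_neq0 (F : fieldType) (u : F) n : (0 < n)%N -> u ^+ n = 1 -> u != 0.
Proof.
move=> n_gt0 un1; apply/eqP => u0; move: un1; rewrite u0 expr0n gtn_eqF //.
by move/eqP; rewrite eq_sym oner_eq0.
Qed.

Lemma canon_elt_modl q1 q2 b1 b2 :
  coprime q1 q2 -> canon_elt q1 q2 b1 b2 = b1 %[mod q1].
Proof. by move=> co; rewrite modn_dvdm ?dvdn_mulr // chinese_modl. Qed.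

Lemma canon_elt_modr q1 q2 b1 b2 :
  coprime q1 q2 -> canon_elt q1 q2 b1 b2 = b2 %[mod q2].
Proof. by move=> co; rewrite modn_dvdm ?dvdn_mull // chinese_modr. Qed.

Lemma expr_canon_elt (R : comNzRingType) (z w : R) q1 q2 b1 b2 :
  coprime q1 q2 -> z ^+ q1 = 1 -> w ^+ q2 = 1 ->
  (z * w) ^+ canon_elt q1 q2 b1 b2 = z ^+ b1 * w ^+ b2.
Proof.
move=> co z_root w_root.
rewrite exprMn -(expr_mod b1 z_root) -(expr_mod b2 w_root).
by rewrite -(canon_elt_modl b1 b2 co) -(canon_elt_modr b1 b2 co)
   (expr_mod _ z_root) (expr_mod _ w_root).
Qed.

Section Decoders.

Variable F : fieldType.
Implicit Types (a b c : F) (z w : F * F).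

Definition decodes a b c z w : Prop :=
  [/\ a + b + c = 1, a + b * z.1 + c * w.1 = 0, a + b * z.2 + c * w.2 = 0
    & a + b * (z.1 * z.2) + c * (w.1 * w.2) = 0].

(* rho z = rho w with denominators cleared, in characteristic 2. *)
Definition rho_cross z w : F :=
  (z.2 - 1) * z.1 * ((w.1 - 1) * w.2) - (w.2 - 1) * w.1 * ((z.1 - 1) * z.2).

Lemma decodesC a b c z w : decodes a b c z w -> decodes a c b w z.
Proof.
by case=> e1 e2 e3 e4; split; [rewrite -e1 | rewrite -e2 | rewrite -e3 | rewrite -e4]; ring.
Qed.

Lemma decodes_swap a b c z w :
  decodes a b c z w -> decodes a b c (z.2, z.1) (w.2, w.1).
Proof.
by case=> e1 e2 e3 e4; split; [rewrite -e1 | rewrite -e3 | rewrite -e2 | rewrite -e4]; rewrite /=; ring.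
Qed.

Lemma decodes_neq1 a b c z w : w.2 != 0 -> decodes a b c z w -> z.1 != 1.
Proof.
case: z w => [z1 z2] [w1 w2] /= nw2 [e1 e2 e3 e4] /=.
apply: contra_neq nw2 => z1_1; move: e1 e2 e3 e4; rewrite z1_1 => e1 e2 e3 e4.
(* For z1 = 1 the equations give c (1 - w1) = 1 and c w2 (1 - w1) = 0. *)
have -> : w2 = (a + b * z2 + c * w2) - (a + b * (1 * z2) + c * (w1 * w2))
                - w2 * ((a + b + c) - 1 - (a + b * 1 + c * w1)) by ring.
by rewrite e1 e2 e3 e4 !subrr mulr0 subr0.
Qed.

Lemma decodes_neq1_all a b c z w :
  z.1 != 0 -> z.2 != 0 -> w.1 != 0 -> w.2 != 0 -> decodes a b c z w ->
  [/\ z.1 != 1, z.2 != 1, w.1 != 1 & w.2 != 1].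
Proof.
move=> nz1 nz2 nw1 nw2 dec; split.
- exact: decodes_neq1 dec.
- exact: decodes_neq1 (decodes_swap dec).
- exact: decodes_neq1 (decodesC dec).
- exact: decodes_neq1 (decodes_swap (decodesC dec)).
Qed.

Lemma decodes_neq a b c z w : z.1 != 0 -> decodes a b c z w -> z.1 != w.1.
Proof.
case: z w => [z1 z2] [w1 w2] /= nz1 [e1 e2 e3 e4] /=.
apply: contra_neq nz1 => w1_z1; move: e1 e2 e3 e4; rewrite -w1_z1 => e1 e2 e3 e4.
(* For w1 = z1 the equations give a (1 - z1) = 0 and a (1 - z1) = - z1. *)
have -> : z1 = (1 - z1) * ((a + b * z1 + c * z1) - (a + b * (z1 * z2) + c * (z1 * w2)))
   - z1 * ((a + b + c) - 1 - (a + b * z1 + c * z1) - (a + b * z2 + c * w2)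
           + (a + b * (z1 * z2) + c * (z1 * w2))) by ring.
by rewrite e1 e2 e3 e4 !subrr addr0 !mulr0 subrr.
Qed.

Lemma decodes_cross a b c z w : decodes a b c z w -> rho_cross z w = 0.
Proof.
case: z w => [z1 z2] [w1 w2] [e1 e2 e3 e4] /=.
set e2' := a + b * z1 + _ in e2; set e3' := a + b * z2 + _ in e3.
set e4' := a + b * _ + _ in e4.
have -> : rho_cross (z1, z2) (w1, w2) =
    (w1 - z1) * ((z2 - 1) * (w2 - 1) * (e2' - (a + b + c - 1))
                 - (z2 - 1) * (e4' - e3' - e2' + (a + b + c - 1)))
  - (w2 - z2) * ((z1 - 1) * (w1 - 1) * (e3' - (a + b + c - 1))
                 - (z1 - 1) * (e4' - e3' - e2' + (a + b + c - 1))).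
  by rewrite /rho_cross /e2' /e3' /e4' /=; ring.
by rewrite e1 e2 e3 e4; ring.
Qed.

Lemma cross_eq2 z w :
  z.2 != 0 -> z.2 != 1 -> rho_cross z w = 0 -> z.2 = w.2 -> z.1 = w.1.
Proof.
case: z w => [z1 z2] [w1 w2] /= nz2 z2n1 hR w2_z2; move: hR; rewrite -w2_z2.
have -> : rho_cross (z1, z2) (w1, z2) = (z2 - 1) * z2 * (w1 - z1).
  by rewrite /rho_cross /=; ring.
by move/eqP; rewrite !mulf_eq0 !subr_eq0 (negPf z2n1) (negPf nz2) => /eqP.
Qed.

(* The first three equations of [decodes] always have the solution below; the
   cross relation is exactly what makes it satisfy the fourth one. *)
Lemma decodes_of_cross z w :
  z.1 != 1 -> z.2 != 1 -> w.1 != 1 -> w.2 != 1 -> z.2 != w.2 ->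
  rho_cross z w = 0 -> exists a b c, decodes a b c z w.
Proof.
case: z w => [z1 z2] [w1 w2] /= z1n1 z2n1 w1n1 w2n1 z2_w2 cross0.
have s1 : z1 - 1 != 0 by rewrite subr_eq0.
have s2 : w1 - 1 != 0 by rewrite subr_eq0.
have t1 : z2 - 1 != 0 by rewrite subr_eq0.
have t2 : w2 - 1 != 0 by rewrite subr_eq0.
have d : w2 - z2 != 0 by rewrite subr_eq0 eq_sym.
pose B := - w2 * (z2 - 1) / (w2 - z2).
have hB2 : B * (w2 - z2) + (z2 - 1) * w2 = 0 by rewrite /B; field.
have hB1 : B * (w1 - z1) + (z1 - 1) * w1 = 0.
  have -> : B * (w1 - z1) + (z1 - 1) * w1 = - rho_cross (z1, z2) (w1, w2) / (w2 - z2).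
    by rewrite /B /rho_cross /=; field.
  by rewrite cross0 oppr0 mul0r.
pose b := B / ((z1 - 1) * (z2 - 1)); pose c := (1 - B) / ((w1 - 1) * (w2 - 1)).
exists (1 - b - c), b, c; split => /=.
- by ring.
- have -> : 1 - b - c + b * z1 + c * w1 =
            (B * (w2 - z2) + (z2 - 1) * w2) / ((z2 - 1) * (w2 - 1)).
    by rewrite /b /c; field; rewrite s1 s2 t1 t2.
  by rewrite hB2 mul0r.
- have -> : 1 - b - c + b * z2 + c * w2 =
            (B * (w1 - z1) + (z1 - 1) * w1) / ((z1 - 1) * (w1 - 1)).
    by rewrite /b /c; field; rewrite s1 s2 t1 t2.
  by rewrite hB1 mul0r.
- have -> : 1 - b - c + b * (z1 * z2) + c * (w1 * w2) =
     (B * (w2 - z2) + (z2 - 1) * w2) / ((z2 - 1) * (w2 - 1)) +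
     (B * (w1 - z1) + (z1 - 1) * w1) / ((z1 - 1) * (w1 - 1)).
    by rewrite /b /c; field; rewrite s1 s2 t1 t2.
  by rewrite hB1 hB2 !mul0r addr0.
Qed.

Lemma rho_pchar2 (z1 z2 : F) : 2%N \in [pchar F] ->
  z1 != 0 -> z2 != 0 -> z1 != 1 -> rho z1 z2 = (z2 - 1) * z1 / ((z1 - 1) * z2).
Proof.
move=> char2 nz1 nz2 z1n1; have s1 : z1 - 1 != 0 by rewrite subr_eq0.
rewrite /rho -(GRing.subr_pchar2 char2 1 z1^-1) -(GRing.subr_pchar2 char2 1 z2^-1).
by field; rewrite nz1 nz2 s1.
Qed.

Lemma rho_eq_cross z w : 2%N \in [pchar F] ->
  z.1 != 0 -> z.2 != 0 -> w.1 != 0 -> w.2 != 0 -> z.1 != 1 -> w.1 != 1 ->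
  rho z.1 z.2 = rho w.1 w.2 <-> rho_cross z w = 0.
Proof.
move=> char2 nz1 nz2 nw1 nw2 z1n1 w1n1.
have s1 : z.1 - 1 != 0 by rewrite subr_eq0.
have s2 : w.1 - 1 != 0 by rewrite subr_eq0.
rewrite !rho_pchar2 //.
rewrite /rho_cross; split.
- by move/eqP; rewrite eqr_div ?mulf_neq0 // => /eqP ->; rewrite subrr.
- by move/eqP; rewrite subr_eq0 -eqr_div ?mulf_neq0 // => /eqP.
Qed.

End Decoders.

Section Collisions.

Variables (F : fieldType) (q1 q2 : nat).
Implicit Types z w : F * F.

Definition mu_pair z : bool := (z.1 ^+ q1 == 1) && (z.2 ^+ q2 == 1).

Definition D_pair z : bool := [&& z.1 != 1, z.2 != 1 & mu_pair z].

Definition rho_collision z w : Prop :=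
  [/\ D_pair z, D_pair w, z != w & rho z.1 z.2 = rho w.1 w.2].

Hypotheses (q1_gt0 : (0 < q1)%N) (q2_gt0 : (0 < q2)%N).

Lemma mu_pair_neq0 z : mu_pair z -> z.1 != 0 /\ z.2 != 0.
Proof.
case/andP=> /eqP z1_root /eqP z2_root.
by split; [exact: root1_neq0 z1_root | exact: root1_neq0 z2_root].
Qed.

Lemma decodable_iff_collision : 2%N \in [pchar F] ->
  (exists a b c z w, [/\ mu_pair z, mu_pair w & decodes a b c z w]) <->
  exists z w, rho_collision z w.
Proof.
move=> char2; split.
- move=> [a [b [c [z [w [mu_z mu_w dec]]]]]]; exists z, w.
  have [nz1 nz2] := mu_pair_neq0 mu_z; have [nw1 nw2] := mu_pair_neq0 mu_w.
  have [z1n1 z2n1 w1n1 w2n1] := decodes_neq1_all nz1 nz2 nw1 nw2 dec.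
  split; rewrite /D_pair ?z1n1 ?z2n1 ?w1n1 ?w2n1 //.
    by apply: contra_neq (decodes_neq nz1 dec) => ->.
  exact/rho_eq_cross/(decodes_cross dec).
- move=> [z [w [/and3P [z1n1 z2n1 mu_z] /and3P [w1n1 w2n1 mu_w] z_neq_w rho_zw]]].
  have [nz1 nz2] := mu_pair_neq0 mu_z; have [nw1 nw2] := mu_pair_neq0 mu_w.
  have cross0 : rho_cross z w = 0 by apply/rho_eq_cross.
  have z2_neq_w2 : z.2 != w.2.
    apply: contra_neq z_neq_w => z2_w2.
    have z1_w1 := cross_eq2 nz2 z2n1 cross0 z2_w2.
    by rewrite [z]surjective_pairing [w]surjective_pairing z1_w1 z2_w2.
  have [a [b [c dec]]] := decodes_of_cross z1n1 z2n1 w1n1 w2n1 z2_neq_w2 cross0.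
  by exists a, b, c, z, w.
Qed.

End Collisions.

Section SparsePolynomials.

Variable F : fieldType.
Implicit Types P : {poly F}.

Definition xy_decoder (x y : F) P : Prop :=
  [/\ P.[x] = 0, P.[y] = 0, P.[x * y] = 0 & P.[1] = 1].

Definition poly_support P : seq nat := [seq i <- iota 0 (size P) | P`_i != 0].

Lemma size_poly_support P : size (poly_support P) = nmonomials P.
Proof. by rewrite size_filter /nmonomials -[in RHS](mkseq_nth 0 P) count_map. Qed.

Lemma horner_poly_support P x : P.[x] = \sum_(i <- poly_support P) P`_i * x ^+ i.
Proof.
rewrite big_filter big_rmcond => [|i /negPn/eqP ->]; last by rewrite mul0r.
by rewrite horner_coef -(big_mkord xpredT (fun i => P`_i * x ^+ i)) /index_iota subn0.
Qed.

Lemma nmonomials_lt4 P : (nmonomials P < 4)%N ->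
  exists a b c i j k, forall x, P.[x] = a * x ^+ i + b * x ^+ j + c * x ^+ k.
Proof.
rewrite -size_poly_support; have := horner_poly_support P.
case: (poly_support P) => [|i [|j [|k []]]] //= hP _.
- by exists 0, 0, 0, 0%N, 0%N, 0%N => x; rewrite hP big_nil !mul0r !addr0.
- by exists P`_i, 0, 0, i, 0%N, 0%N => x; rewrite hP big_seq1 !mul0r !addr0.
- exists P`_i, P`_j, 0, i, j, 0%N => x.
  by rewrite hP !big_cons big_nil mul0r !addr0.
- exists P`_i, P`_j, P`_k, i, j, k => x.
  by rewrite hP !big_cons big_nil addr0 !addrA.
Qed.

Lemma nmonomials_le P (s : seq nat) :
  (forall n, n \notin s -> P`_n = 0) -> (nmonomials P <= size s)%N.
Proof.
move=> P_out; rewrite -size_poly_support; apply: uniq_leq_size.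
  by rewrite filter_uniq ?iota_uniq.
by move=> n; rewrite mem_filter => /andP [+ _]; apply: contraR => /P_out ->; rewrite eqxx.
Qed.

Lemma nmonomials_trinomial (a b c : F) (i j k : nat) :
  (nmonomials (a *: 'X^i + b *: 'X^j + c *: 'X^k) < 4)%N.
Proof.
apply: (@nmonomials_le _ [:: i; j; k]) => n; rewrite !inE !negb_or => /and3P [ni nj nk].
by rewrite !coefD !coefZ !coefXn (negPf ni) (negPf nj) (negPf nk) !mulr0 !addr0.
Qed.

End SparsePolynomials.

Section DecodingPoints.

Variables (F : fieldType) (q1 q2 : nat) (x y : F).
Hypotheses (q1_gt0 : (0 < q1)%N) (q2_gt0 : (0 < q2)%N).
Hypotheses (x_root : x ^+ q1 = 1) (y_root : y ^+ q2 = 1).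
Hypothesis mu_pair_powers :
  forall z, mu_pair q1 q2 z -> exists j, z = (x ^+ j, y ^+ j).

Lemma sparse_decoder_iff_decodable :
  (exists P, xy_decoder x y P /\ (nmonomials P < 4)%N) <->
  exists (a b c : F) (z w : F * F), [/\ mu_pair q1 q2 z, mu_pair q1 q2 w & decodes a b c z w].
Proof.
split.
- move=> [P [[Px Py Pxy P1] small]].
  have [a [b [c [i [j [k hP]]]]]] := nmonomials_lt4 small.
  pose ratio (u : F) n := u ^+ n / u ^+ i.
  have ratio_root (u : F) q n : u ^+ q = 1 -> ratio u n ^+ q = 1.
    by move=> u_root; rewrite exprMn exprVn !(exprAC u _ q) u_root !expr1n invr1 mulr1.
  have ratio_eval (u : F) : u != 0 -> a + b * ratio u j + c * ratio u k = P.[u] / u ^+ i.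
    by move=> nu; rewrite hP /ratio; field; rewrite expf_neq0.
  have nx : x != 0 := root1_neq0 q1_gt0 x_root.
  have ny : y != 0 := root1_neq0 q2_gt0 y_root.
  have ratioM n : ratio x n * ratio y n = ratio (x * y) n.
    by rewrite /ratio !exprMn; field; rewrite !expf_neq0.
  exists a, b, c, (ratio x j, ratio y j), (ratio x k, ratio y k).
  split; try by apply/andP; split; apply/eqP; apply: ratio_root.
  split => /=.
  + by rewrite -P1 hP !expr1n !mulr1.
  + by rewrite ratio_eval // Px mul0r.
  + by rewrite ratio_eval // Py mul0r.
  + by rewrite !ratioM ratio_eval ?mulf_neq0 // Pxy mul0r.
- move=> [a [b [c [z [w [mu_z mu_w [e1 e2 e3 e4]]]]]]].
  have [j zE] := mu_pair_powers mu_z; have [k wE] := mu_pair_powers mu_w.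
  subst z w; exists (a *: 'X^0 + b *: 'X^j + c *: 'X^k).
  split; last exact: nmonomials_trinomial.
  have ev u : (a *: 'X^0 + b *: 'X^j + c *: 'X^k).[u] = a + b * u ^+ j + c * u ^+ k.
    by rewrite !hornerE ?expr0 ?mulr1.
  by split; rewrite ev ?exprMn ?expr1n ?mulr1.
Qed.

End DecodingPoints.

Section CanonicalPoints.

Variables (F : fieldType) (q1 q2 : nat) (gamma : F).
Hypotheses (co : coprime q1 q2) (prim : (q1 * q2).-primitive_root gamma).

Let x := gamma ^+ canon_elt q1 q2 true false.
Let y := gamma ^+ canon_elt q1 q2 false true.

Lemma canon_x_root : x ^+ q1 = 1.
Proof.
apply/eqP; rewrite -exprM -(prim_order_dvd prim) mulnC dvdn_mul //.
by rewrite /dvdn canon_elt_modr // mod0n.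
Qed.

Lemma canon_y_root : y ^+ q2 = 1.
Proof.
apply/eqP; rewrite -exprM -(prim_order_dvd prim) dvdn_mul //.
by rewrite /dvdn canon_elt_modl // mod0n.
Qed.

Lemma prim_root_canon_split : gamma = x * y.
Proof.
rewrite -exprD -[LHS]expr1; apply/eqP; rewrite (eq_prim_root_expr prim) chinese_remainder //.
by apply/andP; split; rewrite -modnDm ?canon_elt_modl ?canon_elt_modr // modnDm.
Qed.

Lemma expr_prim_canon b1 b2 : gamma ^+ canon_elt q1 q2 b1 b2 = x ^+ b1 * y ^+ b2.
Proof.
by rewrite {1}prim_root_canon_split expr_canon_elt // ?canon_x_root ?canon_y_root.
Qed.

Lemma mu_pair_canon_powers z : mu_pair q1 q2 z -> exists j, z = (x ^+ j, y ^+ j).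
Proof.
case: z => z1 z2 /andP [/eqP /= z1_root /eqP /= z2_root].
have : (z1 * z2) ^+ (q1 * q2) = 1.
  by rewrite exprMn {2}mulnC !exprM z1_root z2_root !expr1n mulr1.
move=> /(prim_rootP prim) [j zE]; exists j.
by rewrite /x /y -!exprM !(mulnC _ j) !exprM -zE !expr_canon_elt //= expr0 mulr1 mul1r.
Qed.

Lemma good_iff_sparse_decoder :
  good gamma q1 q2 <-> exists P, xy_decoder x y P /\ (nmonomials P < 4)%N.
Proof.
have [gy gx gxy] : [/\ gamma ^+ canon_elt q1 q2 false true = y,
    gamma ^+ canon_elt q1 q2 true false = x & gamma ^+ canon_elt q1 q2 true true = x * y].
  by rewrite !expr_prim_canon /= !expr0 mul1r mulr1.
split=> [[P [[P_roots P1] small]] | [P [[Px Py Pxy P1] small]]]; exists P; split=> //.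
- by split=> //; rewrite -?gx -?gy -?gxy; apply: P_roots; rewrite !inE eqxx ?orbT.
- by split=> // s; rewrite !inE => /or3P [] /eqP ->; rewrite ?gx ?gy ?gxy.
Qed.

End CanonicalPoints.

Section Units.

Variables (F : finFieldType) (q1 q2 : nat).

Lemma inD_D_pair (u v : {unit F}) :
  inD q1 q2 (u, v) <-> D_pair q1 q2 (FinRing.uval u, FinRing.uval v).
Proof.
have val1 (w : {unit F}) : (w == 1%g) = (FinRing.uval w == 1) by rewrite -val_eqE.
have valX (w : {unit F}) n : (#[w]%g %| n)%N = (FinRing.uval w ^+ n == 1).
  by rewrite order_dvdn -val_eqE FinRing.val_unitX.
rewrite /inD /D_pair /mu_pair /= !val1 !valX.
by split=> [[-> -> -> ->] | /and4P []].
Qed.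

Hypotheses (q1_gt0 : (0 < q1)%N) (q2_gt0 : (0 < q2)%N).

Lemma D_pair_units z : D_pair q1 q2 z ->
  exists u v : {unit F}, z = (FinRing.uval u, FinRing.uval v) /\ inD q1 q2 (u, v).
Proof.
move=> Dz; have /and3P [_ _ /(mu_pair_neq0 q1_gt0 q2_gt0) [nz1 nz2]] := Dz.
have uz1 : z.1 \is a GRing.unit by rewrite unitfE.
have uz2 : z.2 \is a GRing.unit by rewrite unitfE.
exists (FinRing.Unit uz1), (FinRing.Unit uz2).
by split; [rewrite -surjective_pairing | apply/inD_D_pair; rewrite /= -surjective_pairing].
Qed.

Lemma not_rho_injective_iff :
  ~ rho_injective_on_D F q1 q2 <-> exists z w : F * F, rho_collision q1 q2 z w.
Proof.
split.
- move=> not_inj; apply: NNPP => no_collision; apply: not_inj.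
  move=> [u1 v1] [u2 v2] /inD_D_pair Dz /inD_D_pair Dw rho_eq.
  apply/eqP/contraT => neq; case: no_collision.
  exists (FinRing.uval u1, FinRing.uval v1), (FinRing.uval u2, FinRing.uval v2).
  by split=> //; rewrite !xpair_eqE !val_eqE -xpair_eqE.
- move=> [z [w [Dz Dw z_neq_w rho_eq]]] inj.
  have [u1 [v1 [zE Duv1]]] := D_pair_units Dz.
  have [u2 [v2 [wE Duv2]]] := D_pair_units Dw.
  move: z_neq_w rho_eq; rewrite zE wE => /eqP z_neq_w rho_eq.
  by apply: z_neq_w; case: (inj _ _ Duv1 Duv2 rho_eq) => -> ->.
Qed.

End Units.

Unset Implicit Arguments.

Theorem theorem2 (p1 p2 a1 a2 : nat) :
  prime p1 -> prime p2 -> (2 < p1)%N -> (2 < p2)%N -> p1 != p2 ->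
  (0 < a1)%N -> (0 < a2)%N ->
  let q1 := (p1 ^ a1)%N in let q2 := (p2 ^ a2)%N in
  let m := (q1 * q2)%N in
  let t := ord_mod m 2 in
  forall (F : finFieldType), #|F| = (2 ^ t)%N ->
  forall gamma : F, m.-primitive_root gamma ->
  (good gamma q1 q2 <-> ~ rho_injective_on_D F q1 q2).
Proof.
move=> p1_prime p2_prime _ _ p1_neq_p2 _ _ q1 q2 m t F cardF gamma prim.
(* Only the coprimality of q1, q2 and the characteristic of F matter. *)
have co : coprime q1 q2 by rewrite coprimeXl // coprimeXr // prime_coprime // dvdn_prime2.
have q1_gt0 : (0 < q1)%N by rewrite expn_gt0 prime_gt0.
have q2_gt0 : (0 < q2)%N by rewrite expn_gt0 prime_gt0.
have char2 : (2 \in [pchar F])%N := card_finPcharP cardF (isT : prime 2).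
rewrite (good_iff_sparse_decoder co prim).
rewrite (sparse_decoder_iff_decodable q1_gt0 q2_gt0 (canon_x_root co prim)
           (canon_y_root co prim) (mu_pair_canon_powers co prim)).
by rewrite (decodable_iff_collision q1_gt0 q2_gt0 char2) (not_rho_injective_iff F q1_gt0 q2_gt0).
Qed.
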